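(* Let $A$ be a $d$-dimensional polystochastic matrix of order $4$. Suppose that for some tuple $\mathcal{E}\in\{1,2,3\}^d$ and some $y\in\{0,1\}^d$ the subcube $C_y$ of the partition defined by $\mathcal{E}$ satisfies $w(C_y)=0$ or $w(C_y)=2^{d-1}$. Then every line of $A$ contains at most two nonzero entries.
   Context: $A=(a_\alpha)_{\alpha\in\{0,1,2,3\}^d}$; a line is the set of indices obtained by fixing all coordinates but one; $A$ is polystochastic if it is nonnegative and every line sums to $1$. Define $p_1,p_2,p_3:\{0,1,2,3\}\to\{0,1\}$ by $p_1(0)=p_1(1)=0$, $p_1(2)=p_1(3)=1$; $p_2(0)=p_2(2)=0$, $p_2(1)=p_2(3)=1$; $p_3(0)=p_3(3)=0$, $p_3(1)=p_3(2)=1$. For $\mathcal{E}=(\varepsilon_1,\dots,\varepsilon_d)\in\{1,2,3\}^d$ and $y\in\{0,1\}^d$, the subcube $C_y$ is the submatrix of $A$ on the index set $\{\alpha: p_{\varepsilon_i}(\alpha_i)=y_i \text{ for all } i\}$ (a $d$-dimensional submatrix of order $2$). The weight $w(C)$ of a nonnegative matrix $C$ is the sum of its entries. *)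

From mathcomp Require Import all_boot all_order all_algebra.
Set Implicit Arguments. Unset Strict Implicit. Unset Printing Implicit Defensive.
Import Order.TTheory GRing.Theory Num.Theory.
Local Open Scope ring_scope.

Definition idx (d : nat) := {ffun 'I_d -> 'I_4}.

(* alpha with its i-th coordinate replaced by k; as k ranges over 'I_4 this
   traverses the line through alpha in direction i. *)
Definition upd (d : nat) (alpha : idx d) (i : 'I_d) (k : 'I_4) : idx d :=
  [ffun j => if j == i then k else alpha j].

Definition polystochastic (R : realFieldType) (d : nat) (A : idx d -> R) :=
  (forall alpha, 0 <= A alpha) /\
  (forall (i : 'I_d) (alpha : idx d), \sum_(k : 'I_4) A (upd alpha i k) = 1).

(* p_1, p_2, p_3 : {0,1,2,3} -> {0,1} (encoded as bool, 1 = true). *)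
Definition p (e : nat) (a : 'I_4) : bool :=
  match e, val a with
  | 1, 0 | 1, 1 => false | 1, _ => true
  | 2, 0 | 2, 2 => false | 2, _ => true
  | 3, 0 | 3, 3 => false | 3, _ => true
  | _, _ => false
  end.

Definition subcube_weight (R : realFieldType) (d : nat) (A : idx d -> R)
    (E : 'I_d -> nat) (y : 'I_d -> bool) : R :=
  \sum_(alpha : idx d | [forall i, p (E i) (alpha i) == y i]) A alpha.

From mathcomp Require Import all_boot all_order all_algebra.
From mathcomp Require Import lra.
Set Implicit Arguments. Unset Strict Implicit. Unset Printing Implicit Defensive.
Import Order.TTheory GRing.Theory Num.Theory.
Local Open Scope ring_scope.

(* The union of two subcubes C_z and C_z' whose labels differ only at coordinate i is a
   disjoint union of 2^(d-1) lines in direction i, so w(C_z) + w(C_z') = 2^(d-1).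
   Hence "weight 0 or 2^(d-1)" propagates from C_y to every subcube by changing one
   coordinate of the label at a time.  A line through alpha in direction i lies in
   two such complementary subcubes; one of them has weight 0, so the line vanishes
   at the two positions k whose p_(E i)-class belongs to that subcube. *)

Lemma updE d (a : idx d) i k j : upd a i k j = if j == i then k else a j.
Proof. by rewrite /upd ffunE. Qed.

Lemma upd_upd d (a : idx d) i k k' : upd (upd a i k) i k' = upd a i k'.
Proof. by apply/ffunP => j; rewrite !updE; case: eqP. Qed.

Lemma upd_id d (a : idx d) i : upd a i (a i) = a.
Proof. by apply/ffunP => j; rewrite updE; case: eqP => // ->. Qed.

Lemma sum_over_lines (R : realFieldType) d (i : 'I_d) (P : pred (idx d))
    (F : idx d -> R) :
  (forall a k, P (upd a i k) = P a) ->
  \sum_(a | P a) F a =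
    \sum_(b | P b && (b i == ord0)) \sum_(k : 'I_4) F (upd b i k).
Proof.
move=> Pupd.
rewrite (partition_big (fun a => upd a i ord0) (fun b => P b && (b i == ord0)));
  last by move=> a Pa; rewrite Pupd Pa updE eqxx.
apply: eq_bigr => b /andP [Pb /eqP bi0].
rewrite (reindex_onto (upd b i) (fun a => a i));
  last by move=> a /andP [_ /eqP <-]; rewrite upd_upd upd_id.
apply: eq_bigl => k.
by rewrite Pupd Pb upd_upd updE eqxx -bi0 upd_id !eqxx.
Qed.

Lemma card_p_eq e b : (1 <= e <= 3)%N -> #|[set k : 'I_4 | p e k == b]| = 2%N.
Proof.
rewrite cardsE -sum1_card big_mkcond !big_ord_recr big_ord0 /=.
by case: e => [|[|[|[|e]]]] //= _; case: b.
Qed.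

Definition toggle d (z : 'I_d -> bool) (i : 'I_d) : 'I_d -> bool :=
  fun j => if j == i then ~~ z i else z j.

Lemma toggleK d (z : 'I_d -> bool) i : toggle (toggle z i) i =1 z.
Proof. by move=> j; rewrite /toggle eqxx; case: eqP => [->|]; rewrite ?negbK. Qed.

Section Subcubes.

Variables (R : realFieldType) (d : nat) (A : idx d -> R) (E : 'I_d -> nat).
Hypotheses (A_poly : polystochastic A) (E_range : forall j, (1 <= E j <= 3)%N).

Notation w := (subcube_weight A E).
Notation M := ((2 ^ (d - 1))%:R : R).

Lemma eq_subcube_weight (z z' : 'I_d -> bool) : z =1 z' -> w z = w z'.
Proof. by move=> zz'; apply: eq_bigl => a; apply: eq_forallb => j; rewrite zz'. Qed.

Definition slab i (z : 'I_d -> bool) : pred (idx d) :=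
  fun a => [forall j, (j == i) || (p (E j) (a j) == z j)].

Lemma slab_weight i (z : 'I_d -> bool) : \sum_(a | slab i z a) A a = M.
Proof.
have slab_upd a k : slab i z (upd a i k) = slab i z a.
  by apply: eq_forallb => j; rewrite updE; case: eqP.
rewrite (sum_over_lines _ slab_upd).
rewrite (eq_bigr (fun _ => 1)) ?sumr_const; last by move=> b _; apply: A_poly.2.
pose F j := if j == i then pred1 ord0 else [pred k | p (E j) k == z j].
have -> : #|[pred b | slab i z b && (b i == ord0)]| = #|family F|.
  apply: eq_card => b; apply/andP/familyP => [[/forallP Sb bi0] j | Fb].
    by rewrite /F; case: eqP => [->|/eqP ji] //=; have := Sb j; rewrite (negbTE ji).
  split; last by have := Fb i; rewrite /F eqxx.
  by apply/forallP => j; have := Fb j; rewrite /F; case: eqP.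
rewrite card_family foldrE big_map big_enum (bigD1 i) //= /F eqxx card1 mul1n.
rewrite (eq_bigr (fun _ => 2%N)) => [|j /negbTE ->]; last first.
  by apply: etrans (card_p_eq (z j) (E_range j)); apply: eq_card => k; rewrite !inE.
rewrite (eq_bigl (mem [set~ i])) => [|j]; last by rewrite !inE.
by rewrite prod_nat_const cardsC1 card_ord subn1.
Qed.

Lemma subcube_slabE i (z z' : 'I_d -> bool) (a : idx d) :
  (forall j, j != i -> z' j = z j) ->
  [forall j, p (E j) (a j) == z' j] = slab i z a && (p (E i) (a i) == z' i).
Proof.
move=> zz'; apply/idP/andP => [/forallP Ca | [/forallP Sa Ca_i]].
  by split=> //; apply/forallP => j; case: eqVneq => //= ji; rewrite -zz'.
apply/forallP => j; case: (eqVneq j i) => [-> // | ji].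
by rewrite zz' //; have := Sa j; rewrite (negbTE ji).
Qed.

Lemma subcube_weight_toggle i (z : 'I_d -> bool) : w z + w (toggle z i) = M.
Proof.
rewrite -(slab_weight i z) (bigID (fun a : idx d => p (E i) (a i) == z i)) /=.
congr (_ + _); apply: eq_bigl => a; first by rewrite (subcube_slabE (i := i) (z := z)).
rewrite (subcube_slabE (i := i) (z := z)) => [|j /negbTE ji]; last by rewrite /toggle ji.
by rewrite /toggle eqxx; case: (p _ _); case: (z i).
Qed.

Definition extremal (z : 'I_d -> bool) := w z = 0 \/ w z = M.

Lemma extremal_toggle (z : 'I_d -> bool) i : extremal z -> extremal (toggle z i).
Proof. by have := subcube_weight_toggle i z; rewrite /extremal; lra. Qed.

(* Any two sign patterns are joined by toggling the coordinates where they differ. *)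
Lemma extremal_all (y : 'I_d -> bool) : extremal y -> forall z, extremal z.
Proof.
move=> Ey z; move Hn: #|[set j | z j != y j]| => n.
elim: n z Hn => [|n IH] z Hn.
  rewrite /extremal (eq_subcube_weight (z' := y)) // => j.
  by have /setP/(_ j) := cards0_eq Hn; rewrite !inE => /negbFE/eqP.
have /card_gt0P [j] : (0 < #|[set j | z j != y j]|)%N by rewrite Hn.
rewrite inE => zyj.
rewrite /extremal -(eq_subcube_weight (toggleK z j)); apply: extremal_toggle; apply: IH.
apply/eq_add_S; rewrite -Hn [RHS](cardsD1 j) inE zyj add1n; congr _.+1.
apply: eq_card => k; rewrite !inE /toggle; case: (eqVneq k j) => [->|//].
by move: zyj; case: (z j); case: (y j).
Qed.

Lemma subcube_weight_eq0 z (a : idx d) :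
  w z = 0 -> [forall j, p (E j) (a j) == z j] -> A a = 0.
Proof. by move=> wz0 Ca; apply: (psumr_eq0P _ wz0) => // b _; apply: A_poly.1. Qed.

Lemma line_half_vanishes (alpha : idx d) i :
  extremal (fun j => p (E j) (alpha j)) ->
  exists b, forall k, p (E i) k == b -> A (upd alpha i k) = 0.
Proof.
set z := fun j => _.
have line_in z' k : (forall j, j != i -> z' j = z j) -> p (E i) k == z' i ->
    [forall j, p (E j) (upd alpha i k j) == z' j].
  move=> zz' pk; apply/forallP => j; rewrite updE.
  by case: (eqVneq j i) => [-> | ji] //; rewrite zz'.
case=> wz.
  by exists (z i) => k zk; apply: (subcube_weight_eq0 wz); apply: line_in.
have wt0 : w (toggle z i) = 0 by have := subcube_weight_toggle i z; rewrite wz; lra.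
exists (toggle z i i) => k zk; apply: (subcube_weight_eq0 wt0); apply: line_in => //.
by move=> j /negbTE ji; rewrite /toggle ji.
Qed.

End Subcubes.

Theorem mainTheorem6 (R : realFieldType) (d : nat) (A : idx d -> R)
    (E : 'I_d -> nat) (y : 'I_d -> bool) :
  polystochastic A ->
  (forall i, (1 <= E i <= 3)%N) ->
  subcube_weight A E y = 0 \/ subcube_weight A E y = (2 ^ (d - 1))%:R ->
  forall (i : 'I_d) (alpha : idx d),
    (#|[set k : 'I_4 | A (upd alpha i k) != (0%R : R)]| <= 2)%N.
Proof.
move=> A_poly E_range Ey i alpha.
have Ealpha := extremal_all A_poly E_range Ey (fun j => p (E j) (alpha j)).
have [b line_zero] := line_half_vanishes A_poly E_range i Ealpha.
apply: leq_trans (eq_leq (card_p_eq (~~ b) (E_range i))).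
apply/subset_leq_card/subsetP => k.
rewrite !inE; apply: contraR => pk; apply/eqP/line_zero.
by move: pk; case: (p _ _); case: (b).
Qed.
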